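(* Let $r,s,t,a,b,c$ be real numbers with $t\neq0$, and let $M_{H,n}^{(3)}$, $M_{h,n}^{(3)}$ be the matrix sequences defined in the context. Then for all nonnegative integers $m,n$: $$M_{h,m}^{(3)}M_{H,n+1}^{(3)}=M_{H,n+1}^{(3)}M_{h,m}^{(3)}=M_{H,m+n+1}^{(3)},\qquad \big(M_{H,n+1}^{(3)}\big)^{m}=\big(M_{H,1}^{(3)}\big)^{m}M_{h,mn}^{(3)}.$$
   Context: The third-order Horadam matrix sequence is the sequence of $3\times3$ matrices defined by $M_{H,n+3}^{(3)}=rM_{H,n+2}^{(3)}+sM_{H,n+1}^{(3)}+tM_{H,n}^{(3)}$ ($n\ge0$) with $M_{H,0}^{(3)}=\begin{pmatrix} b & c-rb & ta\\ a & b-ra & c-rb-sa\\ \frac{1}{t}(c-rb-sa) & a-\frac{r}{t}(c-rb-sa) & \frac1t\big(-sc+(t+rs)b+(s^2-rt)a\big)\end{pmatrix}$, $M_{H,1}^{(3)}=\begin{pmatrix} c & sb+ta & tb\\ b & c-rb & ta\\ a & b-ra & c-rb-sa\end{pmatrix}$, $M_{H,2}^{(3)}=\begin{pmatrix} rc+sb+ta & sc+tb & tc\\ c & sb+ta & tb\\ b & c-rb & ta\end{pmatrix}$. The generalized Tribonacci matrix sequence satisfies the same recurrence with $M_{h,0}^{(3)}=I_3$, $M_{h,1}^{(3)}=\begin{pmatrix} r&s&t\\1&0&0\\0&1&0\end{pmatrix}$, $M_{h,2}^{(3)}=\begin{pmatrix} r^2+s&rs+t&rt\\ r&s&t\\ 1&0&0\end{pmatrix}$.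 *)

From mathcomp Require Import all_boot all_order all_algebra.
Set Implicit Arguments. Unset Strict Implicit. Unset Printing Implicit Defensive.
Import Order.TTheory GRing.Theory Num.Theory.
Local Open Scope ring_scope.

Section Horadam.
Variable R : realFieldType.

Definition mx3 (a00 a01 a02 a10 a11 a12 a20 a21 a22 : R) : 'M[R]_3 :=
  \matrix_(i < 3, j < 3)
    nth 0 (nth [::] [:: [:: a00; a01; a02]; [:: a10; a11; a12]; [:: a20; a21; a22]] i) j.

Fixpoint rec3_mx (r s t : R) (A0 A1 A2 : 'M[R]_3) (n : nat) : 'M[R]_3 :=
  match n with
  | 0%N => A0
  | 1%N => A1
  | 2%N => A2
  | S ((S ((S k) as k1)) as k2) =>
      r *: rec3_mx r s t A0 A1 A2 k2 + s *: rec3_mx r s t A0 A1 A2 k1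
      + t *: rec3_mx r s t A0 A1 A2 k
  end.

Definition MH0 (r s t a b c : R) : 'M[R]_3 :=
  mx3 b (c - r * b) (t * a)
      a (b - r * a) (c - r * b - s * a)
      (t^-1 * (c - r * b - s * a)) (a - r / t * (c - r * b - s * a))
      (t^-1 * (- s * c + (t + r * s) * b + (s ^+ 2 - r * t) * a)).

Definition MH1 (r s t a b c : R) : 'M[R]_3 :=
  mx3 c (s * b + t * a) (t * b)
      b (c - r * b) (t * a)
      a (b - r * a) (c - r * b - s * a).

Definition MH2 (r s t a b c : R) : 'M[R]_3 :=
  mx3 (r * c + s * b + t * a) (s * c + t * b) (t * c)
      c (s * b + t * a) (t * b)
      b (c - r * b) (t * a).

Definition MH (r s t a b c : R) (n : nat) : 'M[R]_3 :=
  rec3_mx r s t (MH0 r s t a b c) (MH1 r s t a b c) (MH2 r s t a b c) n.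

Definition Mh (r s t : R) (n : nat) : 'M[R]_3 :=
  rec3_mx r s t 1%:M
    (mx3 r s t 1 0 0 0 1 0)
    (mx3 (r ^+ 2 + s) (r * s + t) (r * t) r s t 1 0 0) n.

End Horadam.

(* The companion matrix [Q = M_{h,1}] of the recurrence satisfies
   [Q^3 = r Q^2 + s Q + t] (Cayley-Hamilton), so a matrix solution of the
   recurrence starting with [B, B Q, B Q^2] is [n |-> B Q^n].  Hence
   [M_{h,n} = Q^n] and [M_{H,n} = M_{H,0} Q^n].  As [M_{H,0} Q = Q M_{H,0} = M_{H,1}],
   the matrix [M_{H,1}] commutes with [Q] and [M_{H,n+1} = M_{H,1} Q^n], so all
   three identities reduce to adding and multiplying exponents of [Q]. *)
From mathcomp Require Import all_boot all_order all_algebra.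
From mathcomp Require Import ring.
Import Order.TTheory GRing.Theory Num.Theory.
Set Implicit Arguments. Unset Strict Implicit.
Local Open Scope ring_scope.

Section Mx3Algebra.
Variable R : realFieldType.

Lemma mx3_mul (a00 a01 a02 a10 a11 a12 a20 a21 a22
               b00 b01 b02 b10 b11 b12 b20 b21 b22 : R) :
  mx3 a00 a01 a02 a10 a11 a12 a20 a21 a22 *m mx3 b00 b01 b02 b10 b11 b12 b20 b21 b22 =
  mx3 (a00 * b00 + a01 * b10 + a02 * b20) (a00 * b01 + a01 * b11 + a02 * b21)
      (a00 * b02 + a01 * b12 + a02 * b22)
      (a10 * b00 + a11 * b10 + a12 * b20) (a10 * b01 + a11 * b11 + a12 * b21)
      (a10 * b02 + a11 * b12 + a12 * b22)
      (a20 * b00 + a21 * b10 + a22 * b20) (a20 * b01 + a21 * b11 + a22 * b21)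
      (a20 * b02 + a21 * b12 + a22 * b22).
Proof.
apply/matrixP => i j; rewrite !mxE !big_ord_recr big_ord0 /= !mxE add0r.
by case: i j => [[|[|[|i]]] ?] [[|[|[|j]]] ?].
Qed.

Lemma mx3_add (a00 a01 a02 a10 a11 a12 a20 a21 a22
               b00 b01 b02 b10 b11 b12 b20 b21 b22 : R) :
  mx3 a00 a01 a02 a10 a11 a12 a20 a21 a22 + mx3 b00 b01 b02 b10 b11 b12 b20 b21 b22 =
  mx3 (a00 + b00) (a01 + b01) (a02 + b02) (a10 + b10) (a11 + b11) (a12 + b12)
      (a20 + b20) (a21 + b21) (a22 + b22).
Proof.
apply/matrixP => i j; rewrite !mxE.
by case: i j => [[|[|[|i]]] ?] [[|[|[|j]]] ?].
Qed.

Lemma mx3_scale (k a00 a01 a02 a10 a11 a12 a20 a21 a22 : R) :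
  k *: mx3 a00 a01 a02 a10 a11 a12 a20 a21 a22 =
  mx3 (k * a00) (k * a01) (k * a02) (k * a10) (k * a11) (k * a12)
      (k * a20) (k * a21) (k * a22).
Proof.
apply/matrixP => i j; rewrite !mxE.
by case: i j => [[|[|[|i]]] ?] [[|[|[|j]]] ?].
Qed.

Lemma scalar_mx3 (k : R) : k%:M = mx3 k 0 0 0 k 0 0 0 k.
Proof.
apply/matrixP => i j; rewrite !mxE.
by case: i j => [[|[|[|i]]] ?] [[|[|[|j]]] ?].
Qed.

End Mx3Algebra.

Section Horadam.
Variables (R : realFieldType) (r s t : R).

Lemma rec3_mxSSS (A0 A1 A2 : 'M[R]_3) n :
  rec3_mx r s t A0 A1 A2 n.+3 =
  r *: rec3_mx r s t A0 A1 A2 n.+2 + s *: rec3_mx r s t A0 A1 A2 n.+1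
  + t *: rec3_mx r s t A0 A1 A2 n.
Proof. by []. Qed.

Lemma rec3_mx_geometric (B X : 'M[R]_3) :
  X ^+ 3 = r *: X ^+ 2 + s *: X + t%:M ->
  forall n, rec3_mx r s t B (B * X) (B * X ^+ 2) n = B * X ^+ n.
Proof.
move=> charX; elim/ltn_ind => -[|[|[|n]]] IH; rewrite ?expr0 ?mulr1 //.
rewrite rec3_mxSSS !IH //; last by rewrite ltnS -addn2 leq_addr.
rewrite -[n.+3]addn3 exprD charX -scalemx1 !mulrDr -!scalerAr mulr1.
by rewrite -exprD -exprSr addn2.
Qed.

Definition companion3 : 'M[R]_3 := mx3 r s t 1 0 0 0 1 0.

Local Notation Q := companion3.

Lemma companion3_sqr : Q ^+ 2 = mx3 (r ^+ 2 + s) (r * s + t) (r * t) r s t 1 0 0.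
Proof. by rewrite expr2 -mulmxE mx3_mul; congr mx3; ring. Qed.

Lemma companion3_cubic : Q ^+ 3 = r *: Q ^+ 2 + s *: Q + t%:M.
Proof.
rewrite exprS companion3_sqr -mulmxE mx3_mul scalar_mx3 !mx3_scale !mx3_add.
by congr mx3; ring.
Qed.

Lemma Mh_expr n : Mh r s t n = Q ^+ n.
Proof.
have := rec3_mx_geometric 1 companion3_cubic n.
by rewrite !mul1r companion3_sqr.
Qed.

Variables (a b c : R).
Hypothesis t_neq0 : t != 0.

Lemma MH0_mul_companion3 : MH0 r s t a b c * Q = MH1 r s t a b c.
Proof. by rewrite -mulmxE mx3_mul; congr mx3; field. Qed.

Lemma companion3_mul_MH0 : Q * MH0 r s t a b c = MH1 r s t a b c.
Proof. by rewrite -mulmxE mx3_mul; congr mx3; field. Qed.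

Lemma MH1_mul_companion3 : MH1 r s t a b c * Q = MH2 r s t a b c.
Proof. by rewrite -mulmxE mx3_mul; congr mx3; ring. Qed.

Lemma commr_MH1_companion3 : GRing.comm (MH1 r s t a b c) Q.
Proof.
by rewrite /GRing.comm -{1}companion3_mul_MH0 -MH0_mul_companion3 mulrA.
Qed.

Lemma MH_succ_expr n : MH r s t a b c n.+1 = MH1 r s t a b c * Q ^+ n.
Proof.
rewrite /MH -MH1_mul_companion3 -MH0_mul_companion3 -mulrA -expr2.
by rewrite rec3_mx_geometric ?companion3_cubic // exprS mulrA.
Qed.

End Horadam.

Theorem theorem3p3 (R : realFieldType) (r s t a b c : R) (ht : t != 0) :
  forall m n : nat,
    [/\ Mh r s t m *m MH r s t a b c n.+1 = MH r s t a b c n.+1 *m Mh r s t m,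
        MH r s t a b c n.+1 *m Mh r s t m = MH r s t a b c (m + n).+1
      & (MH r s t a b c n.+1) ^+ m = (MH r s t a b c 1) ^+ m *m Mh r s t (m * n)].
Proof.
move=> m n; rewrite !mulmxE !Mh_expr !MH_succ_expr //.
have commQ k : GRing.comm (MH1 r s t a b c) (companion3 r s t ^+ k).
  exact/commrX/commr_MH1_companion3.
split.
- by rewrite mulrA -commQ -!mulrA -!exprD addnC.
- by rewrite -mulrA -exprD addnC.
- by rewrite expr0 mulr1 (exprMn_comm _ (commQ n)) -exprM mulnC.
Qed.
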